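(* Let $\mathcal{C}$ be a category, $J$ a directed partially ordered set, and let $(f,f^j_\mu):\boldsymbol{X}\to\boldsymbol{Y}$ and $(g,g^j_\nu):\boldsymbol{Y}\to\boldsymbol{Z}=(Z_\nu,r_{\nu\nu'},N)$ be $J$-morphisms of inverse systems in $\mathcal{C}$, where $\boldsymbol{X}=(X_\lambda,p_{\lambda\lambda'},\Lambda)$, $\boldsymbol{Y}=(Y_\mu,q_{\mu\mu'},M)$. Then $(h,h^j_\nu)$ with $h=fg:N\to\Lambda$ and $h^j_\nu=g^j_\nu f^j_{g(\nu)}:X_{fg(\nu)}\to Z_\nu$ ($j\in J$, $\nu\in N$) is a $J$-morphism of $\boldsymbol{X}$ to $\boldsymbol{Z}$.
   Context: An inverse system $\boldsymbol{X}=(X_\lambda,p_{\lambda\lambda'},\Lambda)$ in $\mathcal{C}$: $\Lambda$ directed preordered, morphisms $p_{\lambda\lambda'}:X_{\lambda'}\to X_\lambda$ for $\lambda\le\lambda'$, $p_{\lambda\lambda}=1$, $p_{\lambda\lambda'}p_{\lambda'\lambda''}=p_{\lambda\lambda''}$. A $J$-morphism $(f,f^j_\mu):\boldsymbol{X}\to\boldsymbol{Y}=(Y_\mu,q_{\mu\mu'},M)$ consists of a function $f:M\to\Lambda$ and $\mathcal{C}$-morphisms $f^j_\mu:X_{f(\mu)}\to Y_\mu$ ($\mu\in M$, $j\in J$) such that for all $\mu\le\mu'$ there exist $\lambda\ge f(\mu),f(\mu')$ and $j_0\in J$ with $f^{j'}_\mu p_{f(\mu)\lambda}=q_{\mu\mu'}f^{j'}_{\mu'}p_{f(\mu')\lambda}$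 for all $j'\ge j_0$. *)

Set Implicit Arguments.
Unset Strict Implicit.

Record Category := {
  Ob :> Type;
  Hom : Ob -> Ob -> Type;
  idm : forall a : Ob, Hom a a;
  comp : forall a b c : Ob, Hom b c -> Hom a b -> Hom a c;
  comp_assoc : forall (a b c d : Ob) (h : Hom c d) (g : Hom b c) (f : Hom a b),
      comp h (comp g f) = comp (comp h g) f;
  comp_id_l : forall (a b : Ob) (f : Hom a b), comp (idm b) f = f;
  comp_id_r : forall (a b : Ob) (f : Hom a b), comp f (idm a) = f
}.
Arguments Hom {C} a b : rename.
Arguments idm {C} a : rename.
Arguments comp {C a b c} _ _ : rename.

Record DirectedPreorder := {
  dcarrier :> Type;
  dle : dcarrier -> dcarrier -> Prop;
  dle_refl : forall x, dle x x;
  dle_trans : forall x y z, dle x y -> dle y z -> dle x z;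
  dle_directed : forall x y, exists z, dle x z /\ dle y z
}.
Arguments dle {d} _ _ : rename.

Definition antisymmetric_dp (J : DirectedPreorder) : Prop :=
  forall x y : J, dle x y -> dle y x -> x = y.

Record InverseSystem (C : Category) := {
  isx_index : DirectedPreorder;
  isx_obj : isx_index -> Ob C;
  isx_bond : forall l l' : isx_index, dle l l' -> Hom (isx_obj l') (isx_obj l);
  isx_bond_id : forall (l : isx_index) (h : dle l l), isx_bond h = idm (isx_obj l);
  isx_bond_comp : forall (l l' l'' : isx_index) (h1 : dle l l') (h2 : dle l' l'')
      (h3 : dle l l''), comp (isx_bond h1) (isx_bond h2) = isx_bond h3
}.
Arguments isx_index {C} _.
Arguments isx_obj {C} _ _.
Arguments isx_bond {C} _ {l l'} _.

Definition is_Jmorphism (C : Category) (J : DirectedPreorder)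
  (X Y : InverseSystem C) (f : isx_index Y -> isx_index X)
  (fj : forall (j : J) (mu : isx_index Y), Hom (isx_obj X (f mu)) (isx_obj Y mu))
  : Prop :=
  forall (mu mu' : isx_index Y) (hmu : dle mu mu'),
    exists (lam : isx_index X) (h1 : dle (f mu) lam) (h2 : dle (f mu') lam),
    exists j0 : J, forall j' : J, dle j0 j' ->
      comp (fj j' mu) (isx_bond X h1)
      = comp (isx_bond Y hmu) (comp (fj j' mu') (isx_bond X h2)).
Arguments is_Jmorphism : clear implicits.

(* Say that two families u_j : X_a -> T and v_j : X_b -> T (j in J) agree,
   u ~ v, when they become equal for all large j after precomposition with
   bonds into a common X_l.  Raising l preserves such an equality, so by
   directedness of the index set and of J this is an equivalence relation,
   and it is stable under postcomposition.  A J-morphism is a family with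
   f_mu ~ q_{mu mu'} f_{mu'} for mu <= mu', and for the composite one chains
     g_nu f_{g nu} ~ g_nu q f_m = r g_nu' q' f_m ~ r g_nu' f_{g nu'},
   where m witnesses the J-morphism condition of g at nu <= nu'. *)


Set Implicit Arguments.
Unset Strict Implicit.

Section JMorphisms.

Variables (C : Category) (J : DirectedPreorder).

Definition eventually (P : J -> Prop) : Prop :=
  exists j0 : J, forall j : J, dle j0 j -> P j.

Lemma eventually_mono (P Q : J -> Prop) :
  (forall j, P j -> Q j) -> eventually P -> eventually Q.
Proof.
  intros PQ [j0 HP]. exists j0. intros j hj. exact (PQ j (HP j hj)).
Qed.

Lemma eventually_and (P Q : J -> Prop) :
  eventually P -> eventually Q -> eventually (fun j => P j /\ Q j).
Proof.
  intros [j1 HP] [j2 HQ].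
  destruct (dle_directed j1 j2) as [j0 [h1 h2]].
  exists j0. intros j hj.
  split; [apply HP | apply HQ]; eapply dle_trans; eassumption.
Qed.

Section Agreement.

Variable X : InverseSystem C.

Lemma comp_bond_raise (a b l l' : isx_index X) (T : Ob C)
  (u : Hom (isx_obj X a) T) (v : Hom (isx_obj X b) T)
  (ha : dle a l) (hb : dle b l) (hl : dle l l')
  (ha' : dle a l') (hb' : dle b l') :
  comp u (isx_bond X ha) = comp v (isx_bond X hb) ->
  comp u (isx_bond X ha') = comp v (isx_bond X hb').
Proof.
  intros E.
  rewrite <- (isx_bond_comp ha hl ha'), <- (isx_bond_comp hb hl hb').
  rewrite !comp_assoc, E. reflexivity.
Qed.

Definition bond_agree (a b : isx_index X) (T : Ob C)
  (u : J -> Hom (isx_obj X a) T) (v : J -> Hom (isx_obj X b) T) : Prop :=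
  exists (l : isx_index X) (ha : dle a l) (hb : dle b l),
    eventually (fun j => comp (u j) (isx_bond X ha) = comp (v j) (isx_bond X hb)).

Lemma bond_agree_of_eventually (a : isx_index X) (T : Ob C)
  (u v : J -> Hom (isx_obj X a) T) :
  eventually (fun j => u j = v j) -> bond_agree u v.
Proof.
  intros E. exists a, (dle_refl a), (dle_refl a).
  exact (eventually_mono (fun j Ej => f_equal (fun w => comp w _) Ej) E).
Qed.

Lemma bond_agree_sym (a b : isx_index X) (T : Ob C)
  (u : J -> Hom (isx_obj X a) T) (v : J -> Hom (isx_obj X b) T) :
  bond_agree u v -> bond_agree v u.
Proof.
  intros [l [ha [hb E]]]. exists l, hb, ha.
  exact (eventually_mono (fun j Ej => eq_sym Ej) E).
Qed.

Lemma bond_agree_trans (a b c : isx_index X) (T : Ob C)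
  (u : J -> Hom (isx_obj X a) T) (v : J -> Hom (isx_obj X b) T)
  (w : J -> Hom (isx_obj X c) T) :
  bond_agree u v -> bond_agree v w -> bond_agree u w.
Proof.
  intros [l1 [ha [hb1 E1]]] [l2 [hb2 [hc E2]]].
  destruct (dle_directed l1 l2) as [l [h1 h2]].
  exists l, (dle_trans ha h1), (dle_trans hc h2).
  refine (eventually_mono (fun j E => _) (eventually_and E1 E2)).
  destruct E as [E1j E2j].
  transitivity (comp (v j) (isx_bond X (dle_trans hb1 h1))).
  - exact (comp_bond_raise h1 _ _ E1j).
  - exact (comp_bond_raise h2 _ _ E2j).
Qed.

Lemma bond_agree_ext (a b : isx_index X) (T : Ob C)
  (u u' : J -> Hom (isx_obj X a) T) (v v' : J -> Hom (isx_obj X b) T) :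
  (forall j, u j = u' j) -> (forall j, v j = v' j) ->
  bond_agree u v -> bond_agree u' v'.
Proof.
  intros Eu Ev [l [ha [hb E]]]. exists l, ha, hb.
  refine (eventually_mono (fun j Ej => _) E).
  rewrite <- Eu, <- Ev. exact Ej.
Qed.

Lemma bond_agree_compl (a b : isx_index X) (T T' : Ob C)
  (w : J -> Hom T T')
  (u : J -> Hom (isx_obj X a) T) (v : J -> Hom (isx_obj X b) T) :
  bond_agree u v ->
  bond_agree (fun j => comp (w j) (u j)) (fun j => comp (w j) (v j)).
Proof.
  intros [l [ha [hb E]]]. exists l, ha, hb.
  refine (eventually_mono (fun j Ej => _) E).
  rewrite <- !comp_assoc, Ej. reflexivity.
Qed.

End Agreement.

Lemma is_Jmorphism_bond_agree (X Y : InverseSystem C)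
  (f : isx_index Y -> isx_index X)
  (fj : forall (j : J) (mu : isx_index Y), Hom (isx_obj X (f mu)) (isx_obj Y mu)) :
  is_Jmorphism C J X Y f fj <->
  forall (mu mu' : isx_index Y) (h : dle mu mu'),
    bond_agree (fun j => fj j mu) (fun j => comp (isx_bond Y h) (fj j mu')).
Proof.
  split; intros H mu mu' h;
    destruct (H mu mu' h) as [l [h1 [h2 [j0 E]]]];
    exists l, h1, h2, j0; intros j hj.
  - rewrite <- comp_assoc. exact (E j hj).
  - rewrite comp_assoc. exact (E j hj).
Qed.

Lemma is_Jmorphism_comp (X Y Z : InverseSystem C)
  (f : isx_index Y -> isx_index X)
  (fj : forall (j : J) (mu : isx_index Y), Hom (isx_obj X (f mu)) (isx_obj Y mu))
  (g : isx_index Z -> isx_index Y)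
  (gj : forall (j : J) (nu : isx_index Z), Hom (isx_obj Y (g nu)) (isx_obj Z nu)) :
  is_Jmorphism C J X Y f fj -> is_Jmorphism C J Y Z g gj ->
  is_Jmorphism C J X Z (fun nu => f (g nu))
    (fun j nu => comp (gj j nu) (fj j (g nu))).
Proof.
  intros Hf Hg.
  pose proof (proj1 (is_Jmorphism_bond_agree fj) Hf) as Af.
  pose proof (proj1 (is_Jmorphism_bond_agree gj) Hg) as Ag.
  apply is_Jmorphism_bond_agree. intros nu nu' h.
  destruct (Ag nu nu' h) as [m [k [k' Eg]]].
  set (r := isx_bond Z h).
  apply bond_agree_trans
    with (v := fun j => comp (gj j nu) (comp (isx_bond Y k) (fj j m))).
  { exact (bond_agree_compl (fun j => gj j nu) (Af _ _ k)). }
  apply bond_agree_trans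
    with (v := fun j => comp (comp r (gj j nu')) (comp (isx_bond Y k') (fj j m))).
  { apply bond_agree_of_eventually.
    refine (eventually_mono (fun j Ej => _) Eg).
    rewrite !comp_assoc, Ej. reflexivity. }
  apply (bond_agree_ext (fun j => eq_refl) (fun j => eq_sym (comp_assoc _ _ _))).
  exact (bond_agree_compl (fun j => comp r (gj j nu')) (bond_agree_sym (Af _ _ k'))).
Qed.

End JMorphisms.

Theorem lemma1 (C : Category) (J : DirectedPreorder) (HJ : antisymmetric_dp J)
  (X Y Z : InverseSystem C)
  (f : isx_index Y -> isx_index X)
  (fj : forall (j : J) (mu : isx_index Y), Hom (isx_obj X (f mu)) (isx_obj Y mu))
  (g : isx_index Z -> isx_index Y)
  (gj : forall (j : J) (nu : isx_index Z), Hom (isx_obj Y (g nu)) (isx_obj Z nu))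
  (Hf : is_Jmorphism C J X Y f fj) (Hg : is_Jmorphism C J Y Z g gj) :
  is_Jmorphism C J X Z (fun nu => f (g nu))
    (fun j nu => comp (gj j nu) (fj j (g nu))).
Proof.
  exact (is_Jmorphism_comp Hf Hg).
Qed.
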